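(* Consider the ESBAS meta-algorithm $\sigma^{\textsc{esbas}}$ described in the context, run with a stochastic $K$-armed bandit $\Xi$ that guarantees a pseudo-regret of order $\mathcal{O}(\log(T)/\Delta^\dag_\beta)$. If $\Delta_\beta^\dag\in\Theta\left(\beta^{-m^\dag}\right)$ for some $m^\dag>0$, then $$\overline{\rho}_{ss}^{\sigma^{\textsc{esbas}}}(T)\in\mathcal{O}\left(\log^{m^\dag+2}(T)\right).$$
   Context: Setting. An agent interacts episodically with a fixed stochastic environment (actions in $\mathcal{A}$, observations in $\Omega$, rewards in $[R_{min},R_{max}]$). A trajectory is a finite sequence of (observation, action, reward) triples, with return $\mu(\varepsilon)=\sum_{t=1}^{|\varepsilon|}\gamma^{t-1}r(t)$ for a discount $0\le\gamma<1$. An RL algorithm maps a trajectory set $\mathcal{D}$ to a policy $\pi^\alpha_{\mathcal{D}}$; $\mathbb{E}\mu^\alpha_{\mathcal{D}}$ is the expected return of a trajectory generated by $\pi^\alpha_{\mathcal{D}}$. A portfolio is $\mathcal{P}=\{\alpha^k\}_{k=1}^K$. A meta-algorithm $\sigma$ selects at each meta-time $\tau=1,2,\dots$ an algorithm $\sigma(\tau)\in\mathcal{P}$; a trajectory is generated with the policy currently associated with $\sigma(\tau)$ and added to the shared trajectory set ($\mathcal{D}_0=\emptyset$, $\mathcal{D}_\tau=\mathcal{D}_{\tau-1}\cup\{\varepsilon_\tau\}$); $\mathcal{D}^\sigma_\tau$ and $\mathbb{E}_\sigma$ denote the resulting random trajectory set and expectation. ESBAS: epoch $\beta=0,1,\dots$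 consists of meta-times $2^\beta,\dots,2^{\beta+1}-1$. At the start of epoch $\beta$ each algorithm computes $\pi^\alpha_{\mathcal{D}_{2^\beta-1}}$, frozen for the epoch, and a fresh instance of $\Xi$ (arms = algorithms) is started; during the epoch $\Xi$ chooses which algorithm's frozen policy generates each trajectory, receiving its return as reward. Short-sighted pseudo-regret: $\overline{\rho}^\sigma_{ss}(T)=\mathbb{E}_\sigma\left[\sum_{\tau=1}^T\left(\max_{\alpha\in\mathcal{P}}\mathbb{E}\mu^\alpha_{\mathcal{D}^\sigma_{\tau-1}}-\mathbb{E}\mu^{\sigma(\tau)}_{\mathcal{D}^\sigma_{\tau-1}}\right)\right]$. Gaps: $\Delta^\alpha_\beta=\max_{\alpha'}\mathbb{E}\mu^{\alpha'}_{\mathcal{D}^{\sigma^{\textsc{esbas}}}_{2^\beta-1}}-\mathbb{E}\mu^{\alpha}_{\mathcal{D}^{\sigma^{\textsc{esbas}}}_{2^\beta-1}}$; $\Delta^\dag_\beta$ is the smallest non-null gap at epoch $\beta$. *)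

From mathcomp Require Import all_boot all_order all_algebra.
From mathcomp Require Import all_classical all_reals all_analysis.
From mathcomp Require Import measurable_realfun.
Set Implicit Arguments. Unset Strict Implicit. Unset Printing Implicit Defensive.
Import Order.TTheory GRing.Theory Num.Theory.
Local Open Scope ring_scope.
Local Open Scope ereal_scope.

Section ESBAS_defs.
Context {R : realType}.

Definition emax (K : nat) (m : 'I_K -> \bar R) : \bar R :=
  \big[maxe/-oo]_(a < K) m a.

Definition egap (K : nat) (m : 'I_K -> \bar R) (k : 'I_K) : \bar R :=
  emax m - m k.

Definition min_pos_gap (K : nat) (m : 'I_K -> \bar R) (Dl : R) : Prop :=
  (0 < Dl)%R /\ (exists k, egap m k = Dl%:E) /\
  (forall k, egap m k = 0 \/ Dl%:E <= egap m k).

(** A (randomized, history dependent) K-armed bandit algorithm: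
    given the history of (arm, reward) pairs of the current run
    (most recent first), the probability of pulling each arm next. *)
Definition bandit_alg (K : nat) := seq ('I_K * R) -> 'I_K -> R.

Definition is_bandit_alg (K : nat) (Xi : bandit_alg K) : Prop :=
  (forall h k, (0 <= Xi h k)%R) /\ (forall h, (\sum_(k < K) Xi h k)%R = 1%R) /\
  (forall (s : nat) (a : s.-tuple 'I_K) (k : 'I_K),
      measurable_fun setT (fun r : s.-tuple R => Xi (zip a r) k)).

Definition mean (nu : probability R R) : \bar R := \int[nu]_x x%:E.

(** pseudo-regret E[sum_{t=1}^n (mu* - mu_{I_t})] of Xi on the stochastic bandit
    nu (arm k has reward distribution nu k), started from history h. *)
Fixpoint bandit_regret_from (K : nat) (Xi : bandit_alg K)
    (nu : 'I_K -> probability R R) (n : nat) (h : seq ('I_K * R)) : \bar R :=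
  match n with
  | 0 => 0
  | n'.+1 => \sum_(k < K) (Xi h k)%:E *
      (egap (fun a => mean (nu a)) k +
       \int[nu k]_x bandit_regret_from Xi nu n' ((k, x) :: h))
  end.

Definition bandit_pseudo_regret (K : nat) (Xi : bandit_alg K)
    (nu : 'I_K -> probability R R) (T : nat) : \bar R :=
  bandit_regret_from Xi nu T [::].

Definition log_regret_guarantee (K : nat) (Xi : bandit_alg K) (lo hi : R) : Prop :=
  exists (C : R) (T0 : nat), forall nu : 'I_K -> probability R R,
    (forall k, nu k `[lo, hi]%classic = 1) ->
    forall T : nat, (T0 <= T)%N ->
    forall Dl : R, min_pos_gap (fun a => mean (nu a)) Dl ->
      bandit_pseudo_regret Xi nu T <= (C * ln T%:R / Dl)%:E.

Section RL.
Context {d : measure_display} {Tr : measurableType d} {K : nat}.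

(** gen a D : law of the trajectory generated by the policy pi^a_D
    (algorithm a trained on the trajectory set D) in the environment *)
Definition expected_return (gen : 'I_K -> seq Tr -> probability Tr R)
    (ret : Tr -> R) (a : 'I_K) (D : seq Tr) : \bar R :=
  \int[gen a D]_e (ret e)%:E.

(** epoch of meta-time tau >= 1: 2^beta <= tau < 2^(beta+1) *)
Definition epoch_of (tau : nat) : nat := trunc_log 2 tau.

(** ESBAS expected short-sighted regret accumulated over the next n meta-times,
    when D (most recent first) is the current trajectory set D_{tau-1}
    and A the algorithms selected so far (most recent first). *)
Fixpoint esbas_regret_from (gen : 'I_K -> seq Tr -> probability Tr R)
    (ret : Tr -> R) (Xi : bandit_alg K) (n : nat) (D : seq Tr) (A : seq 'I_K)
    : \bar R :=
  match n with
  | 0 => 0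
  | n'.+1 =>
      let beta := epoch_of (size D).+1 in
      let s := (size D - (2 ^ beta).-1)%N in
      let F := drop s D in                          (* D_{2^beta - 1} *)
      let h := zip (take s A) (map ret (take s D)) in (* history of the fresh Ξ *)
      \sum_(k < K) (Xi h k)%:E *
        (egap (fun a => expected_return gen ret a F) k +
         \int[gen k F]_e esbas_regret_from gen ret Xi n' (e :: D) (k :: A))
  end.

Definition esbas_ss_pseudo_regret (gen : 'I_K -> seq Tr -> probability Tr R)
    (ret : Tr -> R) (Xi : bandit_alg K) (T : nat) : \bar R :=
  esbas_regret_from gen ret Xi T [::] [::].

End RL.
End ESBAS_defs.

From mathcomp Require Import all_boot all_order all_algebra.
From mathcomp Require Import all_classical all_reals all_analysis.
From mathcomp Require Import measurable_realfun.
From mathcomp Require Import lra zify ring.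
Import Order.TTheory GRing.Theory Num.Theory.
Local Open Scope ring_scope.

(* During epoch beta the policies are frozen, so the fresh instance of Xi plays
   a stochastic bandit whose arm k draws the return of a trajectory generated
   by the policy of algorithm k trained on D_{2^beta - 1}; the short-sighted
   regret of the epoch is Xi's pseudo-regret on that bandit over at most 2^beta
   steps.  Once beta exceeds the threshold of the hypothesis on the smallest gap
   (only its lower bound c1 beta^(-mdag) is needed), the guarantee bounds this by
   C log T / (c1 beta^(-mdag)); the finitely many earlier epochs cost a constant.
   There are floor(log2 T) + 1 epochs up to T, each with beta = O(log T), so
   the sum is O(log T * log^(mdag+1) T).
   The ESBAS regret is integrated over trajectories without ever being shown
   measurable, as the monotonicity of nonnegative integrals needs no
   measurability. *)

Section log_arithmetic.
Context {R : realType}.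

Lemma ln_nat_ge0 (m : nat) : 0 <= ln (m%:R : R).
Proof. by case: m => [|m]; [rewrite ln0 | apply: ln_ge0; rewrite ler1n]. Qed.

Lemma ln_nat_le (m n : nat) : (m <= n)%N -> ln (m%:R : R) <= ln n%:R.
Proof.
case: m => [|m] mn; first by rewrite ln0 ?ln_nat_ge0.
by rewrite ler_ln ?posrE ?ltr0n ?ler_nat //; lia.
Qed.

Lemma exists_ln_nat_ge1 : exists n0 : nat, forall n, (n0 <= n)%N -> 1 <= ln (n%:R : R).
Proof.
exists (Num.Def.archi_bound (expR (1 : R))) => n n_ge.
have e_lt : expR 1 < n%:R :> R.
  by apply: lt_le_trans (archi_boundP (expR_ge0 _)) _; rewrite ler_nat.
rewrite -[leLHS](@expRK R) ler_ln ?posrE ?expR_gt0 ?ltW //.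
exact: lt_trans (expR_gt0 _) e_lt.
Qed.

Lemma epoch_count_le_ln (T : nat) : (0 < T)%N -> 1 <= ln (T%:R : R) ->
  (trunc_log 2 T).+1%:R <= ((ln (2 : R))^-1 + 1) * ln (T%:R : R).
Proof.
move=> T_gt0 lnT_ge1.
have ln2_gt0 : 0 < ln (2 : R) by apply: ln_gt0; lra.
have : (trunc_log 2 T)%:R * ln (2 : R) <= ln (T%:R : R).
  rewrite mulr_natl -lnXn; last lra.
  by rewrite ler_ln ?posrE ?exprn_gt0 ?ltr0n // -natrX ler_nat trunc_logP.
rewrite -ler_pdivlMr // -addn1 natrD; lra.
Qed.

Lemma sum_epoch_bounds_le (y K0 m L a : R) (N : nat) :
  0 <= y -> 0 <= K0 -> 0 <= m -> 1 <= L -> N%:R <= a * L ->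
  \sum_(i < N) (y * L * i%:R `^ m + K0) <= (y * a * a `^ m + a * K0) * L `^ (m + 2).
Proof.
move=> y_ge0 K0_ge0 m_ge0 L_ge1 N_le.
have L_gt0 : 0 < L by apply: lt_le_trans L_ge1.
have L_ge0 := ltW L_gt0.
have a_ge0 : 0 <= a by rewrite -(pmulr_lge0 _ L_gt0) (le_trans _ N_le).
have Lm_ge1 : 1 <= L `^ m by rewrite -(powRr0 L) (ler_powR L_ge1).
have LLm : L `^ (m + 2) = L `^ m * L * L.
  by rewrite powRD ?(gt_eqF L_gt0) ?implybT // powR_mulrn // expr2 mulrA.
have Nm_le : N%:R `^ m <= a `^ m * L `^ m.
  by rewrite -powRM //; apply: ge0_ler_powR; rewrite ?nnegrE ?mulr_ge0.
apply: (@le_trans _ _ (\sum_(i < N) (y * L * N%:R `^ m + K0))).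
  apply: ler_sum => i _; rewrite lerD2r ler_wpM2l ?mulr_ge0 //.
  by apply: ge0_ler_powR; rewrite ?nnegrE ?ler0n // ler_nat ltnW.
rewrite sumr_const card_ord -[_ *+ N]mulr_natl LLm.
apply: (@le_trans _ _ (a * L * (y * L * (a `^ m * L `^ m) + K0))).
  apply: ler_pM => //; first by rewrite addr_ge0 ?mulr_ge0 ?powR_ge0.
  by rewrite lerD2r ler_wpM2l ?mulr_ge0.
have LmLL : L <= L `^ m * L * L.
  by rewrite -mulrA -[leLHS]mul1r ler_pM // ler_peMl.
rewrite mulrDr mulrDl; apply: lerD; first by rewrite le_eqVlt; apply/orP; left; apply/eqP; ring.
by rewrite mulrAC ler_wpM2l ?mulr_ge0.
Qed.

End log_arithmetic.

Local Open Scope ereal_scope.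

Section integral_complements.
Context {R : realType} {d : measure_display} {T : measurableType d}.

(* The integral of a nonnegative function is a supremum over simple minorants. *)
Lemma ge0_le_integral_nonmeas (mu : measure T R) (f g : T -> \bar R) :
  (forall x, 0 <= f x) -> (forall x, f x <= g x) ->
  \int[mu]_x f x <= \int[mu]_x g x.
Proof.
move=> f0 fg; have g0 x : 0 <= g x by exact: le_trans (f0 x) (fg x).
rewrite !ge0_integralTE //; apply: ereal_sup_le => _ [h hf <-].
by exists h => // x; exact: le_trans (hf x) (fg x).
Qed.

Lemma integral_cst_probability (P : probability T R) (c : \bar R) :
  \int[P]_x c = c.
Proof. by rewrite (integral_cst P measurableT) /= probability_setT mule1. Qed.

Lemma bounded_integrable_probability (P : probability T R) (f : T -> R) (lo hi : R) :
  measurable_fun setT f -> (forall x, (lo <= f x <= hi)%R) ->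
  P.-integrable setT (EFin \o f).
Proof.
move=> mf f_bd; apply: measurable_bounded_integrable => //.
  by apply: le_lt_trans (probability_le1 P measurableT) (ltry _).
exists (`|lo| + `|hi|)%R; split; first by rewrite realE addr_ge0.
move=> M /ltW + x _ /=; apply: le_trans.
have /andP[flo fhi] := f_bd x.
have := ler_norm hi; have := ler_norm (- lo)%R; have := normr_ge0 hi; have := normr_ge0 lo.
by rewrite normrN ler_norml => *; apply/andP; split; lra.
Qed.

Lemma integral_probability_bounded (P : probability T R) (f : T -> R) (lo hi : R) :
  measurable_fun setT f -> (forall x, (lo <= f x <= hi)%R) ->
  exists r, \int[P]_x (f x)%:E = r%:E /\ (lo <= r <= hi)%R.
Proof.
move=> mf f_bd.
have cst_int (c : R) : P.-integrable setT (EFin \o cst c).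
  apply: (bounded_integrable_probability P (cst c) c c (measurable_cst c)) => x.
  by rewrite lexx.
have f_int := bounded_integrable_probability P f lo hi mf f_bd.
have ge_lo : lo%:E <= \int[P]_x (f x)%:E.
  rewrite -[X in X <= _](integral_cst_probability P).
  apply: (le_integral measurableT (cst_int lo) f_int) => x _.
  by rewrite lee_fin; case/andP: (f_bd x).
have le_hi : \int[P]_x (f x)%:E <= hi%:E.
  rewrite -[X in _ <= X](integral_cst_probability P).
  apply: (le_integral measurableT f_int (cst_int hi)) => x _.
  by rewrite lee_fin; case/andP: (f_bd x).
move: ge_lo le_hi; case: (\int[P]_x (f x)%:E) => [r| |] //= r_lo r_hi.
by exists r; rewrite -!lee_fin r_lo r_hi.
Qed.

End integral_complements.

Section gaps.
Context {R : realType} {K : nat}.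

Lemma emax_EFin (HK : (0 < K)%N) (v : 'I_K -> R) :
  exists a0, emax (fun a => (v a)%:E) = (v a0)%:E /\ forall a, (v a <= v a0)%R.
Proof.
case: (@arg_maxP _ _ _ (Ordinal HK) predT v) => // i _ vi_max.
exists i; split=> [|a]; last exact: vi_max.
apply/le_anti/andP; split; last exact: (le_bigmax _ (fun a => (v a)%:E) i).
by apply: bigmax_le => [|a _]; rewrite ?leNye // lee_fin; exact: vi_max.
Qed.

Lemma egap_EFin_bounded (HK : (0 < K)%N) (v : 'I_K -> R) (lo hi : R) :
  (forall a, (lo <= v a <= hi)%R) ->
  forall k, 0 <= egap (fun a => (v a)%:E) k <= (hi - lo)%:E.
Proof.
move=> v_bd k; rewrite /egap; have [a0 [-> v_max]] := emax_EFin HK v.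
rewrite -EFinB !lee_fin subr_ge0 v_max /=.
by have := v_bd a0; have := v_bd k; move=> /andP[? ?] /andP[? ?]; lra.
Qed.

Lemma exists_min_pos_gap (m : 'I_K -> \bar R) (c : R) :
  (forall k, 0 <= egap m k <= c%:E) -> ~ (forall k, egap m k = 0) ->
  exists Dl, min_pos_gap m Dl.
Proof.
move=> gap_bd /existsNP[k0 gap_k0].
pose w k := fine (egap m k).
have wE k : egap m k = (w k)%:E.
  by have := gap_bd k; rewrite /w; case: (egap m k) => [r| |] /andP[].
have w_ge0 k : (0 <= w k)%R by rewrite -lee_fin -wE; case/andP: (gap_bd k).
have w_k0 : w k0 != 0%R by apply: contra_not_neq gap_k0 => w0; rewrite wE w0.
case: (@arg_minP _ _ _ k0 (fun i => w i != 0%R) w w_k0) => i wi_neq0 wi_min.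
exists (w i); split; first by rewrite lt_def wi_neq0 w_ge0.
split=> [|k]; first by exists i.
have [wk0|wk_neq0] := eqVneq (w k) 0%R; first by left; rewrite wE wk0.
by right; rewrite wE lee_fin wi_min.
Qed.

End gaps.

Definition inv_gap_regret_bound {R : realType} {K : nat} (Xi : @bandit_alg R K)
    (lo hi C : R) (T0 : nat) : Prop :=
  forall nu : 'I_K -> probability R R, (forall k, nu k `[lo, hi]%classic = 1) ->
  forall c : R, (0 <= c)%R -> (forall k, 0 <= egap (fun a => mean (nu a)) k <= c%:E) ->
  forall delta : R, (0 < delta)%R ->
  (forall Dl, min_pos_gap (fun a => mean (nu a)) Dl -> (delta <= Dl)%R) ->
  forall m T : nat, (0 < T)%N -> (m <= T)%N ->
  bandit_pseudo_regret Xi nu m <= (C * ln T%:R / delta + T0%:R * c)%:E.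

Section bandit_regret.
Context {R : realType} {K : nat} {Xi : @bandit_alg R K} (HXi : is_bandit_alg Xi).

Lemma bandit_alg_ge0 h k : (0 <= Xi h k)%R.
Proof. by case: HXi => + _; apply. Qed.

Lemma bandit_alg_sum1 h : (\sum_(k < K) Xi h k)%R = 1%R.
Proof. by case: HXi => _ [+ _]; apply. Qed.

Lemma bandit_alg_mix_addr h (y : 'I_K -> \bar R) (c : R) :
  (0 <= c)%R -> (forall k, 0 <= y k) ->
  \sum_(k < K) (Xi h k)%:E * y k + c%:E = \sum_(k < K) (Xi h k)%:E * (y k + c%:E).
Proof.
move=> c0 y0; under [RHS]eq_bigr => k _ do rewrite ge0_muleDr ?lee_fin //.
rewrite big_split /=; congr (_ + _).
rewrite -ge0_sume_distrl ?sumEFin ?bandit_alg_sum1 ?mul1e // => k _.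
by rewrite lee_fin bandit_alg_ge0.
Qed.

Section arms.
Variable nu : 'I_K -> probability R R.

Local Notation gap := (egap (fun a => mean (nu a))).
Local Notation regret := (bandit_regret_from Xi nu).

Lemma bandit_regret_from_ge0 : (forall k, 0 <= gap k) -> forall n h, 0 <= regret n h.
Proof.
move=> gap_ge0; elim=> [|n IH] h //=.
apply: sume_ge0 => k _; apply: mule_ge0; first by rewrite lee_fin bandit_alg_ge0.
by apply: adde_ge0 => //; apply: integral_ge0.
Qed.

Lemma bandit_regret_from_le (c : R) : (0 <= c)%R ->
  (forall k, 0 <= gap k <= c%:E) -> forall n h, regret n h <= (n%:R * c)%:E.
Proof.
move=> c0 gap_bd; have gap_ge0 k : 0 <= gap k by case/andP: (gap_bd k).
elim=> [|n IH] h /=; first by rewrite mul0r.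
have step k : (Xi h k)%:E * (gap k + \int[nu k]_x regret n ((k, x) :: h)) <=
    (Xi h k)%:E * (n.+1%:R * c)%:E.
  apply: lee_wpmul2l; first by rewrite lee_fin bandit_alg_ge0.
  rewrite -[n.+1]addn1 natrD mulrDl mul1r EFinD [X in _ <= X]addeC.
  apply: leeD; first by case/andP: (gap_bd k).
  rewrite -[X in _ <= X](integral_cst_probability (nu k)).
  by apply: ge0_le_integral_nonmeas => x; [exact: bandit_regret_from_ge0 | exact: IH].
apply: le_trans (lee_sum _ (fun k _ => step k)) _.
rewrite -ge0_sume_distrl ?sumEFin ?bandit_alg_sum1 ?mul1e // => k _.
by rewrite lee_fin bandit_alg_ge0.
Qed.

Lemma bandit_regret_from_gap0 : (forall k, gap k = 0) -> forall n h, regret n h = 0.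
Proof.
move=> gap0; elim=> [|n IH] h //=; apply: big1 => k _.
by rewrite gap0 add0e integral0_eq ?mule0 // => x _; exact: IH.
Qed.

Lemma measurable_bandit_regret_from : (forall k, 0 <= gap k) ->
  forall n s (a : s.-tuple 'I_K),
  measurable_fun setT (fun r : s.-tuple R => regret n (zip a r)).
Proof.
move=> gap_ge0; elim=> [|n IH] s a /=; first exact: measurable_cst.
apply: emeasurable_sum => k; apply: emeasurable_funM.
  by apply/measurable_EFinP; case: HXi => _ [_ +]; apply.
apply: emeasurable_funD; first exact: measurable_cst.
pose f (p : s.-tuple R * R) := regret n (zip [tuple of k :: a] [tuple of p.2 :: p.1]).
apply: (@measurable_fun_fubini_tonelli_F _ _ _ _ _ (nu k) f).
  exact: measurableT_comp (IH _ [tuple of k :: a])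
    (measurable_cons measurable_snd measurable_fst).
by move=> p; exact: bandit_regret_from_ge0.
Qed.

Lemma measurable_bandit_regret_from_cons : (forall k, 0 <= gap k) ->
  forall n k h, measurable_fun setT (fun x : R => regret n ((k, x) :: h)).
Proof.
move=> gap_ge0 n k h.
pose a := map_tuple fst (in_tuple h); pose r := map_tuple snd (in_tuple h).
rewrite (_ : (fun x => _) = (fun r' => regret n (zip [tuple of k :: a] r')) \o
    (fun x : R => [tuple of x :: r])); last by apply/funext => x /=; rewrite zip_unzip.
exact: measurableT_comp (measurable_bandit_regret_from gap_ge0 n _ [tuple of k :: a])
  (@measurable_cons _ _ _ _ (fun x : R => x) _ (fun=> r) (@measurable_id _ _ setT)
     (measurable_cst _)).
Qed.

End arms.

(* Below [T0] steps the guarantee is replaced by the trivial bound [m * c]. *)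
Lemma log_regret_guarantee_inv_gap {lo hi : R} : log_regret_guarantee Xi lo hi ->
  exists (C : R) (T0 : nat), (0 <= C)%R /\ inv_gap_regret_bound Xi lo hi C T0.
Proof.
case=> C [T0 guarantee].
have maxC_ge0 : (0 <= Num.max C 0%R)%R by rewrite le_max lexx orbT.
exists (Num.max C 0%R), T0; split => // nu nu_supp c c0 gap_bd delta delta0 delta_le m T T_gt0 mT.
have log_term_ge0 : (0 <= Num.max C 0%R * ln T%:R / delta)%R.
  by rewrite !mulr_ge0 ?ln_nat_ge0 // invr_ge0 ltW.
have const_term_ge0 : (0 <= T0%:R * c)%R by rewrite mulr_ge0.
have [gap0|/exists_min_pos_gap] := pselect (forall k, egap (fun a => mean (nu a)) k = 0).
  by rewrite /bandit_pseudo_regret bandit_regret_from_gap0 // lee_fin addr_ge0.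
move=> /(_ c gap_bd) [Dl min_Dl].
have [T0m|mT0] := leqP T0 m.
  apply: le_trans (guarantee nu nu_supp m T0m Dl min_Dl) _; rewrite lee_fin.
  rewrite -[leLHS]addr0; apply: lerD => //.
  have Dl0 : (0 < Dl)%R by case: min_Dl.
  apply: (@le_trans _ _ (Num.max C 0%R * ln m%:R / Dl)%R).
    apply: ler_wpM2r; first by rewrite invr_ge0 ltW.
    by rewrite ler_wpM2r ?ln_nat_ge0 ?le_max ?lexx.
  apply: ler_pM.
  - by rewrite mulr_ge0 ?ln_nat_ge0.
  - by rewrite invr_ge0 ltW.
  - by rewrite ler_wpM2l // ln_nat_le.
  - by rewrite lef_pV2 ?posrE // delta_le.
apply: le_trans (bandit_regret_from_le nu c c0 gap_bd m [::]) _.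
rewrite lee_fin -[leLHS]add0r; apply: lerD => //.
by rewrite ler_wpM2r // ler_nat ltnW.
Qed.

End bandit_regret.

Section esbas.
Context {R : realType} {d : measure_display} {Tr : measurableType d} {K : nat}.
Context (HK : (0 < K)%N) {lo hi : R} {ret : Tr -> R}.
Context (ret_meas : measurable_fun setT ret) (ret_bd : forall e, (lo <= ret e <= hi)%R).
Context {gen : 'I_K -> seq Tr -> probability Tr R} {Xi : @bandit_alg R K}.
Context (HXi : is_bandit_alg Xi).

Lemma expected_return_bounded a F :
  exists r, expected_return gen ret a F = r%:E /\ (lo <= r <= hi)%R.
Proof. exact: integral_probability_bounded. Qed.

Lemma egap_expected_return_bounded F k :
  0 <= egap (fun a => expected_return gen ret a F) k <= (hi - lo)%:E.
Proof.
pose v a := fine (expected_return gen ret a F).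
have -> : (fun a => expected_return gen ret a F) = (fun a => (v a)%:E).
  by apply/funext => a; rewrite /v; have [r [-> _]] := expected_return_bounded a F.
by apply: egap_EFin_bounded => // a; rewrite /v; have [r [-> ]] := expected_return_bounded a F.
Qed.

Lemma egap_expected_return_ge0 F k : 0 <= egap (fun a => expected_return gen ret a F) k.
Proof. by case/andP: (egap_expected_return_bounded F k). Qed.

Lemma lo_le_hi : (lo <= hi)%R.
Proof.
have /andP[gap_ge0 gap_le] := egap_expected_return_bounded [::] (Ordinal HK).
by rewrite -subr_ge0 -lee_fin (le_trans gap_ge0 gap_le).
Qed.

Let RET : {mfun Tr >-> R} := mfun_Sub (mem_set ret_meas).

(* Arm k of the stochastic bandit played by the fresh instance of Xi during an
   epoch whose policies were trained on F. *)
Definition return_law F k : probability R R := distribution (gen k F) RET.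

Lemma mean_return_law F :
  (fun a => mean (return_law F a)) = (fun a => expected_return gen ret a F).
Proof.
apply/funext => a; rewrite /mean /return_law integral_distribution //.
exact: (bounded_integrable_probability _ _ _ _ ret_meas ret_bd).
Qed.

Lemma integral_return_law F k (G : R -> \bar R) :
  measurable_fun setT G -> (forall x, 0 <= G x) ->
  \int[return_law F k]_x G x = \int[gen k F]_e G (ret e).
Proof. by move=> mG G0; rewrite ge0_integral_distribution. Qed.

Lemma return_law_support F k : return_law F k `[lo, hi]%classic = 1.
Proof.
rewrite /return_law /distribution /pushforward -(probability_setT (gen k F)).
by congr (gen k F _); apply/seteqP; split => // e _ /=; rewrite in_itv /= ret_bd.
Qed.

Lemma egap_mean_return_law_bounded F k :
  0 <= egap (fun a => mean (return_law F a)) k <= (hi - lo)%:E.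
Proof. by rewrite mean_return_law egap_expected_return_bounded. Qed.

Local Notation Phi := (esbas_regret_from gen ret Xi).
Local Notation regret F := (bandit_regret_from Xi (return_law F)).

Lemma bandit_regret_return_law_ge0 F n h : 0 <= regret F n h.
Proof.
by apply: bandit_regret_from_ge0 => // k; case/andP: (egap_mean_return_law_bounded F k).
Qed.

Lemma measurable_bandit_regret_return_law F n k h :
  measurable_fun setT (fun x => regret F n ((k, x) :: h)).
Proof.
apply: measurable_bandit_regret_from_cons => // a.
by case/andP: (egap_mean_return_law_bounded F a).
Qed.

Lemma esbas_regret_from_ge0 n D A : 0 <= Phi n D A.
Proof.
elim: n D A => [|n IH] D A //=.
apply: sume_ge0 => k _; apply: mule_ge0; first by rewrite lee_fin bandit_alg_ge0.
by apply: adde_ge0; [exact: egap_expected_return_ge0 | apply: integral_ge0].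
Qed.

(* D and A list the trajectories and selected algorithms most recent first: the
   last [(2 ^ b).-1] trajectories of D form the set frozen at the start of epoch
   [b], and the first ones are the epoch's history so far. *)
Definition epoch_start_set (b : nat) (D : seq Tr) : seq Tr :=
  drop (size D - (2 ^ b).-1) D.

Definition epoch_history (b : nat) (D : seq Tr) (A : seq 'I_K) : seq ('I_K * R) :=
  zip (take (size D - (2 ^ b).-1) A) (map ret (take (size D - (2 ^ b).-1) D)).

Lemma epoch_start_set_cons b e D : ((2 ^ b).-1 <= size D)%N ->
  epoch_start_set b (e :: D) = epoch_start_set b D.
Proof. by move=> le_D; rewrite /epoch_start_set /= subSn. Qed.

Lemma epoch_history_cons b e D k A : ((2 ^ b).-1 <= size D)%N ->
  epoch_history b (e :: D) (k :: A) = (k, ret e) :: epoch_history b D A.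
Proof. by move=> le_D; rewrite /epoch_history /= subSn. Qed.

Lemma esbas_regret_fromS n D A (b := epoch_of (size D).+1) :
  Phi n.+1 D A = \sum_(k < K) (Xi (epoch_history b D A) k)%:E *
    (egap (fun a => expected_return gen ret a (epoch_start_set b D)) k +
     \int[gen k (epoch_start_set b D)]_e Phi n (e :: D) (k :: A)).
Proof. by []. Qed.

(* With [j] meta-times left in epoch [b], the regret until the end of the epoch
   is that of the epoch's fresh bandit instance continued from its history. *)
Lemma esbas_regret_epoch_step b (L : R) : (0 <= L)%R -> forall n j D A,
  (0 < j <= 2 ^ b)%N -> size D = (2 ^ b.+1 - 1 - j)%N ->
  (forall D' A', size D' = (2 ^ b.+1 - 1)%N -> Phi (n - j) D' A' <= L%:E) ->
  Phi n D A <=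
    regret (epoch_start_set b D) (minn n j) (epoch_history b D A) + L%:E.
Proof.
move=> L0; elim=> [|n IH] j D A /andP[j_gt0 j_le] size_D L_bd.
  by rewrite min0n add0e lee_fin.
have pow_gt0 : (0 < 2 ^ b)%N by rewrite expn_gt0.
have size_ge : ((2 ^ b).-1 <= size D)%N by move: size_D; rewrite expnS; lia.
have epoch_D : epoch_of (size D).+1 = b.
  rewrite /epoch_of; apply: trunc_log_eq => //.
  by rewrite size_D expnS; apply/andP; split; lia.
rewrite esbas_regret_fromS epoch_D.
set F := epoch_start_set b D; set h := epoch_history b D A.
have next_le e k : Phi n (e :: D) (k :: A) <=
    regret F (minn n j.-1) ((k, ret e) :: h) + L%:E.
  have [j1|j_gt1] := leqP j 1.
    have -> : j.-1 = 0%N by lia.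
    rewrite minn0 add0e -(_ : (n.+1 - j = n)%N); last by lia.
    by apply: L_bd; rewrite /= size_D expnS; lia.
  rewrite /F /h -(epoch_start_set_cons b e) // -(epoch_history_cons b e D k) //.
  apply: IH; first by apply/andP; split; lia.
    by rewrite /= size_D expnS; lia.
  by move=> D' A' size_D'; rewrite (_ : (n - j.-1 = n.+1 - j)%N); [exact: L_bd | lia].
have -> : minn n.+1 j = (minn n j.-1).+1 by lia.
rewrite [X in _ <= X + _]/= bandit_alg_mix_addr //; last first.
  move=> k; apply: adde_ge0; first by case/andP: (egap_mean_return_law_bounded F k).
  by apply: integral_ge0 => x _; exact: bandit_regret_return_law_ge0.
apply: lee_sum => k _; apply: lee_wpmul2l; first by rewrite lee_fin bandit_alg_ge0.
rewrite mean_return_law -[X in _ <= X]addeA; apply: leeD; first exact: lexx.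
apply: le_trans (ge0_le_integral_nonmeas _ _ _ (fun e => esbas_regret_from_ge0 _ _ _)
  (next_le^~ k)) _.
rewrite ge0_integralD //.
- rewrite integral_cst_probability integral_return_law //.
    exact: measurable_bandit_regret_return_law.
  by move=> x; exact: bandit_regret_return_law_ge0.
- by move=> e _; exact: bandit_regret_return_law_ge0.
- exact: measurableT_comp (measurable_bandit_regret_return_law _ _ _ _) ret_meas.
Qed.

Lemma esbas_regret_from_le_sum_epochs (T : nat) (u : nat -> R) :
  (forall i, 0 <= u i)%R ->
  (forall b F m, size F = (2 ^ b).-1 -> (m <= 2 ^ b)%N -> (m <= T)%N ->
     regret F m [::] <= (u b)%:E) ->
  forall N k b m D A, N = (b + k)%N -> size D = (2 ^ b).-1 ->
  (2 ^ b + m <= 2 ^ N)%N -> (m <= T)%N -> Phi m D A <= (\sum_(b <= i < N) u i)%:E.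
Proof.
move=> u_ge0 epoch_bd N; elim=> [|k IH] b m D A N_eq size_D m_le mT.
  have -> : m = 0%N by move: m_le; rewrite N_eq addn0; lia.
  by rewrite lee_fin sumr_ge0.
have [->|m_gt0] := posnP m; first by rewrite lee_fin sumr_ge0.
have pow_gt0 : (0 < 2 ^ b)%N by rewrite expn_gt0.
have pow_le : (2 ^ b.+1 <= 2 ^ N)%N by rewrite leq_exp2l //; lia.
rewrite big_ltn; last by lia.
have first_epoch : Phi m D A <=
    regret D (minn m (2 ^ b)) [::] + (\sum_(b.+1 <= i < N) u i)%:E.
  have := esbas_regret_epoch_step b _ (sumr_ge0 _ (fun i _ => u_ge0 i)) m (2 ^ b) D A.
  rewrite /epoch_start_set /epoch_history size_D subnn drop0 !take0; apply.
  - by rewrite pow_gt0 leqnn.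
  - by rewrite expnS; lia.
  - move=> D' A' size_D'; apply: (IH b.+1); rewrite ?size_D' //; try lia.
    by move: m_le pow_le; rewrite expnS; lia.
apply: le_trans first_epoch _; rewrite EFinD; apply: leeD; last exact: lexx.
by apply: epoch_bd => //; [exact: geq_minr | exact: leq_trans (geq_minl _ _) mT].
Qed.

Lemma esbas_ss_pseudo_regret_le_sum_epochs (T : nat) (u : nat -> R) :
  (forall i, 0 <= u i)%R ->
  (forall b F m, size F = (2 ^ b).-1 -> (m <= 2 ^ b)%N -> (m <= T)%N ->
     regret F m [::] <= (u b)%:E) ->
  esbas_ss_pseudo_regret gen ret Xi T <= (\sum_(i < (trunc_log 2 T).+1) u i)%:E.
Proof.
move=> u_ge0 epoch_bd; rewrite -(big_mkord xpredT u).
apply: (esbas_regret_from_le_sum_epochs T u u_ge0 epoch_bd _ (trunc_log 2 T).+1 0) => //.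
by rewrite expn0 add1n; exact: trunc_log_ltn.
Qed.

Lemma epoch_pseudo_regret_le {C : R} {T0 : nat} {c1 mdag : R} {b0 : nat} :
  inv_gap_regret_bound Xi lo hi C T0 -> (0 <= C)%R -> (0 < c1)%R ->
  (forall b, (b0 <= b)%N -> forall F, size F = (2 ^ b).-1 ->
     forall Dl, min_pos_gap (fun a => expected_return gen ret a F) Dl ->
     (c1 * b%:R `^ (- mdag) <= Dl)%R) ->
  forall T, (0 < T)%N ->
  forall b F m, size F = (2 ^ b).-1 -> (m <= 2 ^ b)%N -> (m <= T)%N ->
  regret F m [::] <=
    (C / c1 * ln T%:R * b%:R `^ mdag + (T0 + 2 ^ maxn b0 1)%:R * (hi - lo))%:E.
Proof.
move=> regret_bd C_ge0 c1_gt0 gap_lb T T_gt0 b F m size_F m_le mT.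
have hl_ge0 : (0 <= hi - lo)%R by rewrite subr_ge0 lo_le_hi.
have log_term_ge0 : (0 <= C / c1 * ln T%:R * b%:R `^ mdag)%R.
  by rewrite !mulr_ge0 ?ln_nat_ge0 ?powR_ge0 // invr_ge0 ltW.
have [b_ge|b_lt] := leqP (maxn b0 1) b.
  have b_gt0 : (0 < b%:R :> R)%R by rewrite ltr0n; lia.
  have delta_gt0 : (0 < c1 * b%:R `^ (- mdag))%R by rewrite mulr_gt0 // powR_gt0.
  apply: le_trans (regret_bd _ (return_law_support F) _ hl_ge0
    (egap_mean_return_law_bounded F) _ delta_gt0 _ m T T_gt0 mT) _.
    by move=> Dl; rewrite mean_return_law; apply: gap_lb => //; lia.
  rewrite lee_fin; apply: lerD; last by rewrite ler_wpM2r // ler_nat leq_addr.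
  rewrite powRN invfM invrK le_eqVlt; apply/orP; left; apply/eqP.
  by field; rewrite gt_eqF.
apply: le_trans (bandit_regret_from_le HXi (return_law F) (hi - lo) hl_ge0
  (egap_mean_return_law_bounded F) m [::]) _.
rewrite lee_fin -[leLHS]add0r; apply: lerD => //; rewrite ler_wpM2r // ler_nat.
by apply: leq_trans m_le (leq_trans _ (leq_addl _ _)); rewrite leq_exp2l //; lia.
Qed.

End esbas.

Theorem corollary2 (R : realType) (d : measure_display) (Tr : measurableType d)
  (K : nat) (HK : (0 < K)%N)
  (lo hi : R) (ret : Tr -> R)
  (ret_meas : measurable_fun setT ret)
  (ret_bd : forall e, (lo <= ret e <= hi)%R)
  (gen : 'I_K -> seq Tr -> probability Tr R)
  (gen_meas : forall (n : nat) (a : 'I_K) (B : set Tr), measurable B ->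
      measurable_fun setT (fun D : n.-tuple Tr => gen a D B))
  (Xi : bandit_alg K) (HXi : is_bandit_alg Xi)
  (Hguar : log_regret_guarantee Xi lo hi)
  (mdag : R) (Hm : (0 < mdag)%R)
  (HDelta : exists (c1 c2 : R) (beta0 : nat), (0 < c1)%R /\ (0 < c2)%R /\
      forall beta : nat, (beta0 <= beta)%N ->
      forall F : seq Tr, size F = (2 ^ beta).-1 ->
      forall Dl : R, min_pos_gap (fun a => expected_return gen ret a F) Dl ->
        (c1 * beta%:R `^ (- mdag) <= Dl <= c2 * beta%:R `^ (- mdag))%R) :
  exists (C : R) (T1 : nat), forall T : nat, (T1 <= T)%N ->
    esbas_ss_pseudo_regret gen ret Xi T <= (C * (ln T%:R) `^ (mdag + 2))%:E.
Proof.
have [C [T0 [C_ge0 regret_bd]]] := log_regret_guarantee_inv_gap HXi Hguar.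
have [c1 [c2 [b0 [c1_gt0 [_ gap_bd]]]]] := HDelta.
have gap_lb b b_ge F size_F Dl min_Dl := (andP (gap_bd b b_ge F size_F Dl min_Dl)).1.
have [n0 ln_ge1] := @exists_ln_nat_ge1 R.
pose K0 := ((T0 + 2 ^ maxn b0 1)%:R * (hi - lo))%R.
pose a := ((ln (2 : R))^-1 + 1)%R.
exists (C / c1 * a * a `^ mdag + a * K0)%R, (maxn n0 1) => T T_ge.
have T_gt0 : (0 < T)%N by move: T_ge; rewrite geq_max => /andP[].
have lnT_ge1 : (1 <= ln (T%:R : R))%R.
  by apply: ln_ge1; move: T_ge; rewrite geq_max => /andP[].
have K0_ge0 : (0 <= K0)%R by rewrite mulr_ge0 // subr_ge0 (lo_le_hi HK ret_meas ret_bd).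
pose u b := (C / c1 * ln T%:R * b%:R `^ mdag + K0)%R.
have u_ge0 b : (0 <= u b)%R.
  by rewrite addr_ge0 // !mulr_ge0 ?ln_nat_ge0 ?powR_ge0 // invr_ge0 ltW.
apply: le_trans (esbas_ss_pseudo_regret_le_sum_epochs HK ret_meas ret_bd HXi T u u_ge0
  (epoch_pseudo_regret_le HK ret_meas ret_bd HXi regret_bd C_ge0 c1_gt0 gap_lb T T_gt0)) _.
rewrite lee_fin; apply: sum_epoch_bounds_le => //; last exact: epoch_count_le_ln.
- by rewrite mulr_ge0 // invr_ge0 ltW.
- exact: ltW.
Qed.
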